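(* Let $\Xi=\{(x_1,x_2)\in\mathbb{R}^2: x_1,x_2\ge 0,\ x_1+x_2\le 1\}$, write $x_0=1-x_1-x_2$, and for $\beta>0$ let $$F_\beta(x_1,x_2)\;=\;-\frac12\Big|\sum_{k=0}^2 x_k\mathbf{v}_k\Big|^2+\frac1\beta\sum_{k=0}^2 x_k\log(3x_k),$$ where $\mathbf{v}_k=(\cos(2\pi k/3),\sin(2\pi k/3))$. Let $\mathbf{p}=(1/3,1/3)$. Then $\mathbf{p}$ is a critical point of $F_\beta$ for every $\beta>0$; it is a local minimum of $F_\beta$ for $\beta<\beta_1:=2$, and a local maximum of $F_\beta$ for $\beta>2$.
   Context: Convention: $0\log 0=0$. Equivalently $F_\beta(\mathbf{x})=\frac14-\frac34\sum_{k=0}^2x_k^2+\frac1\beta\sum_{k=0}^2x_k\log(3x_k)$. *)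

From Stdlib Require Import Reals.
From Coquelicot Require Import Coquelicot.
Open Scope R_scope.

Definition xlog3 (t : R) : R := if Req_EM_T t 0 then 0 else t * ln (3 * t).

Definition vk (k : nat) : R * R :=
  (cos (2 * PI * INR k / 3), sin (2 * PI * INR k / 3)).

Definition in_Xi (x : R * R) : Prop :=
  0 <= fst x /\ 0 <= snd x /\ fst x + snd x <= 1.

Definition F (beta : R) (x : R * R) : R :=
  let x1 := fst x in let x2 := snd x in let x0 := 1 - x1 - x2 in
  let m1 := x0 * fst (vk 0) + x1 * fst (vk 1) + x2 * fst (vk 2) in
  let m2 := x0 * snd (vk 0) + x1 * snd (vk 1) + x2 * snd (vk 2) in
  - / 2 * (m1 ^ 2 + m2 ^ 2) + / beta * (xlog3 x0 + xlog3 x1 + xlog3 x2).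

Definition pt : R * R := (1 / 3, 1 / 3).

Definition critical_point (f : R * R -> R) (x : R * R) : Prop :=
  filterdiff f (locally x) (fun _ => 0).

Definition local_min_on_Xi (f : R * R -> R) (x : R * R) : Prop :=
  locally x (fun y => in_Xi y -> f x <= f y).
Definition local_max_on_Xi (f : R * R -> R) (x : R * R) : Prop :=
  locally x (fun y => in_Xi y -> f y <= f x).

(* Since v_0 + v_1 + v_2 = 0, the interaction term of F_beta is -3/2 Q, where
   Q = a^2 + a b + b^2 is a positive definite form in the deviation (a, b) of
   (x_1, x_2) from p.  The entropy term E = sum x_k log(3 x_k) is, to second
   order, (3/2) sum (x_k - 1/3)^2 = 3 Q; the bounds
   u^2/(2(1+d)) <= (1+u) log(1+u) - u <= u^2/(2(1-d))  for |u| <= d < 1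
   make this quantitative: 3 Q/(1+d) <= E <= 3 Q/(1-d) near p.  Thus
   F_beta = (3/(beta (1 +- d)) - 3/2) Q, whose sign near p is that of 2 - beta,
   and |F_beta| = O(|x - p|^2) shows that p is critical. *)

From Stdlib Require Import Reals Lra Psatz.
From Coquelicot Require Import Coquelicot.
Open Scope R_scope.

Lemma vk_0 : vk 0 = (1, 0).
Proof.
  unfold vk; simpl. replace (2 * PI * 0 / 3) with 0 by field.
  now rewrite cos_0, sin_0.
Qed.

Lemma vk_1 : vk 1 = (- (1 / 2), sqrt 3 / 2).
Proof.
  unfold vk; simpl. replace (2 * PI * 1 / 3) with (PI - PI / 3) by field.
  now rewrite Rtrigo_facts.cos_pi_minus, sin_PI_x, cos_PI3, sin_PI3.
Qed.

Lemma vk_2 : vk 2 = (- (1 / 2), - (sqrt 3 / 2)).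
Proof.
  unfold vk; simpl. replace (2 * PI * (1 + 1) / 3) with (PI / 3 + PI) by field.
  now rewrite neg_cos, neg_sin, cos_PI3, sin_PI3.
Qed.

Definition quad_dev (y : R * R) : R :=
  (fst y - 1 / 3) ^ 2 + (fst y - 1 / 3) * (snd y - 1 / 3) + (snd y - 1 / 3) ^ 2.

Definition entropy (y : R * R) : R :=
  xlog3 (1 - fst y - snd y) + xlog3 (fst y) + xlog3 (snd y).

Lemma F_decomposition beta y :
  F beta y = - (3 / 2) * quad_dev y + / beta * entropy y.
Proof.
  unfold F, quad_dev, entropy. rewrite vk_0, vk_1, vk_2. cbn [fst snd].
  assert (Hs : sqrt 3 * sqrt 3 = 3) by (apply sqrt_sqrt; lra).
  set (s := sqrt 3) in *. set (x1 := fst y). set (x2 := snd y).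
  f_equal.
  replace (((1 - x1 - x2) * 0 + x1 * (s / 2) + x2 * - (s / 2)) ^ 2)
    with (s * s * ((x1 - x2) ^ 2 / 4)) by field.
  rewrite Hs. field.
Qed.

Lemma entropy_pt : entropy pt = 0.
Proof.
  unfold entropy, pt, xlog3; cbn [fst snd].
  replace (1 - 1 / 3 - 1 / 3) with (1 / 3) by field.
  destruct (Req_EM_T (1 / 3) 0); [lra |].
  replace (3 * (1 / 3)) with 1 by field. rewrite ln_1. ring.
Qed.

Lemma F_pt beta : F beta pt = 0.
Proof.
  rewrite F_decomposition, entropy_pt. unfold quad_dev, pt; cbn [fst snd]. ring.
Qed.

Lemma quad_dev_ge0 y : 0 <= quad_dev y.
Proof.
  unfold quad_dev. set (a := fst y - 1 / 3). set (b := snd y - 1 / 3).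
  pose proof (pow2_ge_0 (a + b)). pose proof (pow2_ge_0 a). pose proof (pow2_ge_0 b).
  nra.
Qed.

Lemma quad_dev_le y :
  quad_dev y <= 3 / 2 * ((fst y - 1 / 3) ^ 2 + (snd y - 1 / 3) ^ 2).
Proof.
  unfold quad_dev. pose proof (pow2_ge_0 (fst y - 1 / 3 - (snd y - 1 / 3))). nra.
Qed.

Lemma ln_1p_bounds x : -1 < x -> x <= (1 + x) * ln (1 + x) /\ ln (1 + x) <= x.
Proof.
  intros Hx.
  assert (ln_le_sub_1 : forall y, 0 < y -> ln y <= y - 1).
  { intros y Hy. rewrite <- (ln_exp (y - 1)). apply ln_le; [exact Hy |].
    pose proof (exp_ineq1_le (y - 1)). lra. }
  split; [| pose proof (ln_le_sub_1 (1 + x)); lra].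
  assert (Hinv : 0 < / (1 + x)) by (apply Rinv_0_lt_compat; lra).
  pose proof (ln_le_sub_1 _ Hinv) as H. rewrite ln_Rinv in H by lra.
  assert (/ (1 + x) * (1 + x) = 1) by (field; lra).
  nra.
Qed.

Lemma min_at_0_of_derive_sign (G dG : R -> R) d :
  (forall x, - d <= x <= d -> is_derive G x (dG x)) ->
  (forall x, 0 <= x <= d -> 0 <= dG x) ->
  (forall x, - d <= x <= 0 -> dG x <= 0) ->
  forall u, - d <= u <= d -> G 0 <= G u.
Proof.
  intros HD Hpos Hneg u Hu.
  destruct (MVT_gen G 0 u dG) as [c [Hc HG]].
  - intros x Hx. apply HD. unfold Rmin, Rmax in Hx. destruct (Rle_dec 0 u); lra.
  - intros x Hx. apply continuity_pt_filterlim.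
    apply (ex_derive_continuous G x). exists (dG x).
    apply HD. unfold Rmin, Rmax in Hx. destruct (Rle_dec 0 u); lra.
  - unfold Rmin, Rmax in Hc. destruct (Rle_dec 0 u).
    + assert (0 <= dG c) by (apply Hpos; lra). nra.
    + assert (dG c <= 0) by (apply Hneg; lra). nra.
Qed.

Lemma xlnx_1p_lower d u : 0 < d < 1 -> - d <= u <= d ->
  u ^ 2 / 2 <= (1 + d) * ((1 + u) * ln (1 + u) - u).
Proof.
  intros Hd Hu.
  set (G := fun u => (1 + d) * ((1 + u) * ln (1 + u) - u) - u ^ 2 / 2).
  assert (HG : G 0 <= G u).
  { apply (min_at_0_of_derive_sign G (fun x => (1 + d) * ln (1 + x) - x) d); auto.
    - intros x Hx. unfold G. auto_derive; [lra | field; lra].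
    - intros x Hx. destruct (ln_1p_bounds x) as [H _]; [lra |]. nra.
    - intros x Hx. destruct (ln_1p_bounds x) as [H H']; [lra |]. nra. }
  unfold G in HG. rewrite Rplus_0_r, ln_1 in HG. lra.
Qed.

Lemma xlnx_1p_upper d u : 0 < d < 1 -> - d <= u <= d ->
  (1 - d) * ((1 + u) * ln (1 + u) - u) <= u ^ 2 / 2.
Proof.
  intros Hd Hu.
  set (G := fun u => u ^ 2 / 2 - (1 - d) * ((1 + u) * ln (1 + u) - u)).
  assert (HG : G 0 <= G u).
  { apply (min_at_0_of_derive_sign G (fun x => x - (1 - d) * ln (1 + x)) d); auto.
    - intros x Hx. unfold G. auto_derive; [lra | field; lra].
    - intros x Hx. destruct (ln_1p_bounds x) as [H H']; [lra |]. nra.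
    - intros x Hx. destruct (ln_1p_bounds x) as [H _]; [lra |]. nra. }
  unfold G in HG. rewrite Rplus_0_r, ln_1 in HG. lra.
Qed.

Lemma xlog3_bounds d t : 0 < d < 1 -> Rabs (3 * t - 1) <= d ->
  (3 * t - 1) ^ 2 / 2 <= (1 + d) * (3 * xlog3 t - (3 * t - 1)) /\
  (1 - d) * (3 * xlog3 t - (3 * t - 1)) <= (3 * t - 1) ^ 2 / 2.
Proof.
  intros Hd Ht. apply Rabs_le_between in Ht.
  assert (E : 3 * xlog3 t = (1 + (3 * t - 1)) * ln (1 + (3 * t - 1))).
  { unfold xlog3. destruct (Req_EM_T t 0); [lra |].
    replace (1 + (3 * t - 1)) with (3 * t) by ring. ring. }
  rewrite E. split; [apply xlnx_1p_lower | apply xlnx_1p_upper]; assumption.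
Qed.

Lemma entropy_bounds d y : 0 < d < 1 ->
  Rabs (fst y - 1 / 3) < d / 6 -> Rabs (snd y - 1 / 3) < d / 6 ->
  3 * quad_dev y <= (1 + d) * entropy y /\ (1 - d) * entropy y <= 3 * quad_dev y.
Proof.
  intros Hd H1 H2. apply Rabs_def2 in H1, H2.
  destruct (xlog3_bounds d (fst y)) as [L1 U1]; [exact Hd | apply Rabs_le_between; lra |].
  destruct (xlog3_bounds d (snd y)) as [L2 U2]; [exact Hd | apply Rabs_le_between; lra |].
  destruct (xlog3_bounds d (1 - fst y - snd y)) as [L0 U0];
    [exact Hd | apply Rabs_le_between; lra |].
  unfold quad_dev, entropy. split; nra.
Qed.

Lemma locally_pt_box r (P : R * R -> Prop) : 0 < r ->
  (forall y, Rabs (fst y - 1 / 3) < r -> Rabs (snd y - 1 / 3) < r -> P y) ->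
  locally pt P.
Proof.
  intros Hr HP. exists (mkposreal r Hr). intros y [H1 H2]. exact (HP y H1 H2).
Qed.

Lemma F_local_min beta : 0 < beta -> beta < 2 -> local_min_on_Xi (F beta) pt.
Proof.
  intros Hb Hb2.
  (* any d with (1 + d) beta <= 2 works *)
  set (d := (2 - beta) / (2 + beta)).
  assert (Hd1 : d * (2 + beta) = 2 - beta) by (unfold d; field; lra).
  assert (Hd : 0 < d < 1) by (split; nra).
  apply (locally_pt_box (d / 6)); [lra |]. intros y H1 H2 _.
  destruct (entropy_bounds d y Hd H1 H2) as [HE _].
  rewrite F_pt, F_decomposition. pose proof (quad_dev_ge0 y).
  assert (HE' : 3 / 2 * quad_dev y <= / beta * entropy y).
  { apply (Rmult_le_reg_l beta); [exact Hb |].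
    replace (beta * (/ beta * entropy y)) with (entropy y) by (field; lra). nra. }
  lra.
Qed.

Lemma F_local_max beta : 2 < beta -> local_max_on_Xi (F beta) pt.
Proof.
  intros Hb.
  (* chosen so that (1 - d) beta = 2 *)
  set (d := (beta - 2) / beta).
  assert (Hd1 : d * beta = beta - 2) by (unfold d; field; lra).
  assert (Hd : 0 < d < 1) by (split; nra).
  apply (locally_pt_box (d / 6)); [lra |]. intros y H1 H2 _.
  destruct (entropy_bounds d y Hd H1 H2) as [_ HE].
  rewrite F_pt, F_decomposition. pose proof (quad_dev_ge0 y).
  assert (HE' : / beta * entropy y <= 3 / 2 * quad_dev y).
  { apply (Rmult_le_reg_l beta); [lra |].
    replace (beta * (/ beta * entropy y)) with (entropy y) by (field; lra). nra. }
  lra.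
Qed.

Lemma filterdiff_zero_of_quadratic_bound {K : AbsRing} {U V : NormedModule K}
    (f : U -> V) (x : U) (C : R) :
  locally x (fun y => norm (minus (f y) (f x)) <= C * norm (minus y x) ^ 2) ->
  filterdiff f (locally x) (fun _ => zero).
Proof.
  intros Hf. split; [apply is_linear_zero |].
  intros x' Hx'. apply is_filter_lim_locally_unique in Hx'. subst x'.
  intros eps.
  assert (Hr : 0 < eps / (Rabs C + 1)).
  { apply Rdiv_lt_0_compat; [apply cond_pos | pose proof (Rabs_pos C); lra]. }
  assert (Hsmall : locally x (fun y => norm (minus y x) < eps / (Rabs C + 1))).
  { apply locally_le_locally_norm. now exists (mkposreal _ Hr). }
  generalize (filter_and _ _ Hf Hsmall). apply filter_imp.
  intros y [Hq Hn].
  apply (Rle_trans _ (norm (minus (f y) (f x)))).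
  { right; f_equal. exact (@minus_zero_r (NormedModule.AbelianGroup K V) _). }
  set (n := norm (minus y x)) in *. set (r := eps / (Rabs C + 1)) in *.
  assert (Hn0 : 0 <= n) by apply norm_ge_0.
  pose proof (Rabs_pos C). pose proof (Rle_abs C).
  assert (Hreps : (Rabs C + 1) * r = eps) by (unfold r; field; lra).
  assert (HC : C * n <= eps) by nra.
  nra.
Qed.

Lemma norm_minus_pt_sqr (y : R * R) :
  @norm R_AbsRing (prod_NormedModule R_AbsRing R_NormedModule R_NormedModule)
    (minus y pt) ^ 2 = (fst y - 1 / 3) ^ 2 + (snd y - 1 / 3) ^ 2.
Proof.
  destruct y as [y1 y2].
  change (sqrt (Rabs (y1 - 1 / 3) ^ 2 + Rabs (y2 - 1 / 3) ^ 2) ^ 2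
    = (y1 - 1 / 3) ^ 2 + (y2 - 1 / 3) ^ 2).
  rewrite !pow2_abs. apply pow2_sqrt.
  pose proof (pow2_ge_0 (y1 - 1 / 3)). pose proof (pow2_ge_0 (y2 - 1 / 3)). lra.
Qed.

Lemma F_critical beta : 0 < beta -> critical_point (F beta) pt.
Proof.
  intros Hb.
  apply (@filterdiff_zero_of_quadratic_bound R_AbsRing
    (prod_NormedModule R_AbsRing R_NormedModule R_NormedModule) R_NormedModule
    (F beta) pt (3 / 2 * (3 / 2 + 6 / beta))).
  apply (locally_pt_box (1 / 12)); [lra |]. intros y H1 H2.
  rewrite norm_minus_pt_sqr.
  change (Rabs (F beta y - F beta pt) <=
    3 / 2 * (3 / 2 + 6 / beta) * ((fst y - 1 / 3) ^ 2 + (snd y - 1 / 3) ^ 2)).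
  destruct (entropy_bounds (1 / 2) y) as [HL HU]; [lra | lra | lra |].
  rewrite F_pt, Rminus_0_r, F_decomposition.
  pose proof (quad_dev_ge0 y). pose proof (quad_dev_le y).
  assert (Hib : 0 < / beta) by (apply Rinv_0_lt_compat; lra).
  assert (HE : 0 <= / beta * entropy y <= 6 / beta * quad_dev y)
    by (unfold Rdiv; split; nra).
  apply Rabs_le. split; nra.
Qed.

Theorem lemma4p1 :
  (forall beta : R, 0 < beta -> critical_point (F beta) pt) /\
  (forall beta : R, 0 < beta -> beta < 2 -> local_min_on_Xi (F beta) pt) /\
  (forall beta : R, 2 < beta -> local_max_on_Xi (F beta) pt).
Proof.
  split; [exact F_critical | split; [exact F_local_min | exact F_local_max]].
Qed.
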